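(* Let $T$ be any complete first-order theory. Then $\mathfrak C$ contains no infinite indiscernible set if and only if there are $n<\omega$ and a formula $\varphi(x_0,\dots,x_{n-1})$ such that for all pairwise distinct $a_0,\dots,a_{n-1}\in\mathfrak C$ there are permutations $\pi_1,\pi_2$ of $\{0,\dots,n-1\}$ with $\mathfrak C\models\varphi[a_{\pi_1(0)},\dots,a_{\pi_1(n-1)}]\wedge\neg\varphi[a_{\pi_2(0)},\dots,a_{\pi_2(n-1)}]$.
   Context: $\mathfrak C$ is the monster model of $T$. An indiscernible set is a set $\mathbf I$ of elements such that for each $n$, all $n$-tuples of pairwise distinct elements of $\mathbf I$ have the same type. *)

From mathcomp Require Import all_boot perm.
From Stdlib Require Import List.

Set Implicit Arguments.
Unset Strict Implicit.
Unset Printing Implicit Defensive.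

Record language := Language {
  Fsym : Type;            (* function symbols (constants = arity 0) *)
  Rsym : Type;
  farity : Fsym -> nat;
  rarity : Rsym -> nat }.

Section FOL.
Variable L : language.

Inductive term : Type :=
  | tvar : nat -> term
  | tapp : forall f : Fsym L, ('I_(farity f) -> term) -> term.

Inductive formula : Type :=
  | fFalse : formula
  | fEq : term -> term -> formula
  | fRel : forall r : Rsym L, ('I_(rarity r) -> term) -> formula
  | fNot : formula -> formula
  | fAnd : formula -> formula -> formula
  | fOr : formula -> formula -> formula
  | fImp : formula -> formula -> formula
  | fAll : nat -> formula -> formula
  | fEx : nat -> formula -> formula.

Fixpoint occurs (v : nat) (t : term) : Prop :=
  match t with
  | tvar w => v = w
  | tapp f ts => exists i, occurs v (ts i)
  end.

Fixpoint free (v : nat) (phi : formula) : Prop :=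
  match phi with
  | fFalse => False
  | fEq t s => occurs v t \/ occurs v s
  | fRel r ts => exists i, occurs v (ts i)
  | fNot p => free v p
  | fAnd p q | fOr p q | fImp p q => free v p \/ free v q
  | fAll w p | fEx w p => v <> w /\ free v p
  end.

Definition sentence (phi : formula) : Prop := forall v, ~ free v phi.

Record structure := Structure {
  dom :> Type;
  dom_inh : dom;
  funs : forall f : Fsym L, ('I_(farity f) -> dom) -> dom;
  rels : forall r : Rsym L, ('I_(rarity r) -> dom) -> Prop }.

Definition upd (M : structure) (a : nat -> M) (v : nat) (b : M) : nat -> M :=
  fun w => if w == v then b else a w.

Fixpoint eval (M : structure) (a : nat -> M) (t : term) : M :=
  match t with
  | tvar n => a n
  | tapp f ts => @funs M f (fun i => eval a (ts i))
  end.

Fixpoint sat (M : structure) (a : nat -> M) (phi : formula) : Prop :=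
  match phi with
  | fFalse => False
  | fEq t s => eval a t = eval a s
  | fRel r ts => @rels M r (fun i => eval a (ts i))
  | fNot p => ~ sat a p
  | fAnd p q => sat a p /\ sat a q
  | fOr p q => sat a p \/ sat a q
  | fImp p q => sat a p -> sat a q
  | fAll v p => forall b : M, sat (upd a v b) p
  | fEx v p => exists b : M, sat (upd a v b) p
  end.

Definition theory := formula -> Prop.

Definition is_theory (T : theory) : Prop := forall phi, T phi -> sentence phi.

Definition models (M : structure) (T : theory) : Prop :=
  forall phi, T phi -> forall a : nat -> M, sat a phi.

Definition entails (T : theory) (phi : formula) : Prop :=
  forall (M : structure), models M T -> forall a : nat -> M, sat a phi.

Definition complete_theory (T : theory) : Prop :=
  is_theory T /\ (exists M : structure, models M T) /\
  forall phi, sentence phi -> entails T phi \/ entails T (fNot phi).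

(** omega-saturation: every 1-type over finitely many parameters
    (the values of [a] at the variables in [P]) that is finitely
    satisfiable in M is realized in M. *)
Definition omega_saturated (M : structure) : Prop :=
  forall (Sigma : formula -> Prop) (P : list nat) (v : nat) (a : nat -> M),
    (forall phi, Sigma phi -> forall w, free w phi -> w = v \/ In w P) ->
    (forall l : list formula, (forall phi, In phi l -> Sigma phi) ->
       exists b : M, forall phi, In phi l -> sat (upd a v b) phi) ->
    exists b : M, forall phi, Sigma phi -> sat (upd a v b) phi.

(** Tuples: the assignment x_i |-> c i for i < n (default elsewhere). *)
Definition tassign (M : structure) (n : nat) (c : 'I_n -> M) : nat -> M :=
  fun k => match insub k with Some i => c i | None => dom_inh M end.

Definition fv_below (n : nat) (phi : formula) : Prop :=
  forall w, free w phi -> w < n.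

Definition finite_set (M : structure) (I : M -> Prop) : Prop :=
  exists l : list M, forall x, I x -> In x l.

Definition indiscernible_set (M : structure) (I : M -> Prop) : Prop :=
  forall (n : nat) (c d : 'I_n -> M),
    injective c -> injective d ->
    (forall i, I (c i)) -> (forall i, I (d i)) ->
    forall phi, fv_below n phi ->
      (sat (tassign c) phi <-> sat (tassign d) phi).

End FOL.

From mathcomp Require Import all_boot perm zify.
From Stdlib Require Import List Classical FunctionalExtensionality ClassicalEpsilon.

(* An infinite indiscernible set is built one element at a time inside the
   omega-saturated model.  Call a finite list A extendable if, for every finite
   family of formulas and every m, A can be prolonged by m new elements to a list
   on which each formula of the family is homogeneous, i.e. takes the same truth
   value on all injective tuples.  If the right-hand side fails, every formula has
   a tuple on which all its permutations agree; since finitely many formulas can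
   be coded into one (phi(x) <-> psi(y) on disjoint variables), the empty list is
   extendable.  Extendability of A ++ [b] is a type in b over A which is finitely
   satisfiable because A is extendable, so saturation realizes it; the union of
   the resulting chain is infinite and indiscernible.  Conversely, a formula that
   separates two permutations of every injective tuple forbids any infinite
   indiscernible set. *)

Set Implicit Arguments.
Unset Strict Implicit.
Unset Printing Implicit Defensive.

Section Coincidence.
Variables (L : language) (M : structure L).

Lemma eval_ext (a b : nat -> M) (t : term L) :
  (forall w, occurs w t -> a w = b w) -> eval a t = eval b t.
Proof.
elim: t => [n|f ts IH] Hab /=; first exact: Hab.
congr funs; apply: functional_extensionality => i.
by apply: IH => w Hw; apply: Hab; exists i.
Qed.

Lemma sat_ext (phi : formula L) (a b : nat -> M) :
  (forall w, free w phi -> a w = b w) -> (sat a phi <-> sat b phi).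
Proof.
elim: phi a b => [|t s|r ts|p IH|p IHp q IHq|p IHp q IHq|p IHp q IHq|v p IH|v p IH]
  a b Hab /=.
- by [].
- by rewrite (eval_ext (b := b) (t := t)) ?(eval_ext (b := b) (t := s)) // => w Hw;
    apply: Hab; [right | left].
- have -> // : (fun i => eval a (ts i)) = (fun i => eval b (ts i)).
  apply: functional_extensionality => i; apply: eval_ext => w Hw.
  by apply: Hab; exists i.
- by rewrite (IH a b).
- by rewrite (IHp a b) ?(IHq a b) // => w Hw; apply: Hab; [right | left].
- by rewrite (IHp a b) ?(IHq a b) // => w Hw; apply: Hab; [right | left].
- by rewrite (IHp a b) ?(IHq a b) // => w Hw; apply: Hab; [right | left].
- have Hx x : sat (upd a v x) p <-> sat (upd b v x) p.
    apply: IH => w Hw; rewrite /upd; case: eqP => // Hwv.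
    by apply: Hab; split=> // Evw; apply: Hwv.
  by split=> H x; apply/Hx.
- have Hx x : sat (upd a v x) p <-> sat (upd b v x) p.
    apply: IH => w Hw; rewrite /upd; case: eqP => // Hwv.
    by apply: Hab; split=> // Evw; apply: Hwv.
  by split=> -[x /Hx H]; exists x.
Qed.

Lemma sat_ext_below n (phi : formula L) (a b : nat -> M) :
  fv_below n phi -> (forall i, i < n -> a i = b i) -> (sat a phi <-> sat b phi).
Proof. by move=> Hphi Hab; apply: sat_ext => w /Hphi; apply: Hab. Qed.

End Coincidence.

Definition override (T : Type) (a u : nat -> T) s n : nat -> T :=
  fun x => if s <= x < s + n then u x else a x.

Lemma override0 (T : Type) (a u : nat -> T) s : override a u s 0 = a.
Proof. by apply: functional_extensionality => x; rewrite /override; case: ifP => //; lia. Qed.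

Section FiniteConnectives.
Variable L : language.
Implicit Types (p q : formula L) (l : list (formula L)).

Definition fAndL l := fold_right (@fAnd L) (fNot (fFalse L)) l.
Definition fOrL l := fold_right (@fOr L) (fFalse L) l.
Definition fIff p q := fAnd (fImp p q) (fImp q p).
Definition fExs s n p := fold_right (@fEx L) p (List.seq s n).
Definition fAlls s n p := fold_right (@fAll L) p (List.seq s n).

Lemma free_fAndL w l : free w (fAndL l) -> exists2 p, In p l & free w p.
Proof.
elim: l => [|q l IH] //= [Hq|/IH [p Hp Hw]]; first by exists q; [left|].
by exists p; [right|].
Qed.

Lemma free_fOrL w l : free w (fOrL l) -> exists2 p, In p l & free w p.
Proof.
elim: l => [|q l IH] //= [Hq|/IH [p Hp Hw]]; first by exists q; [left|].
by exists p; [right|].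
Qed.

Lemma free_fExs w s n p : free w (fExs s n p) -> ~ (s <= w < s + n) /\ free w p.
Proof.
rewrite /fExs; elim: n s => [|n IH] s /=; first by move=> H; split=> //; lia.
move=> [Hws /IH [Hw Hp]]; split=> // Hin.
by have [Es|] : w = s \/ s.+1 <= w < s.+1 + n by lia.
Qed.

Lemma free_fAlls w s n p : free w (fAlls s n p) -> ~ (s <= w < s + n) /\ free w p.
Proof.
rewrite /fAlls; elim: n s => [|n IH] s /=; first by move=> H; split=> //; lia.
move=> [Hws /IH [Hw Hp]]; split=> // Hin.
by have [Es|] : w = s \/ s.+1 <= w < s.+1 + n by lia.
Qed.

Variable M : structure L.
Implicit Types (a u : nat -> M).

Lemma sat_fAndL a l : sat a (fAndL l) <-> forall p, In p l -> sat a p.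
Proof.
elim: l => [|q l IH] /=; first by split=> // _ [].
by rewrite IH; split=> [[Hq Hl] p [<-|]|H]; auto.
Qed.

Lemma sat_fOrL a l : sat a (fOrL l) <-> exists2 p, In p l & sat a p.
Proof.
elim: l => [|q l IH] /=; first by split=> [[]|[p []]].
rewrite IH; split=> [[Hq|[p Hp Ha]]|[p [<-|Hp] Ha]]; auto.
- by exists q; [left|].
- by exists p; [right|].
- by right; exists p.
Qed.

Lemma override_upd a u s n x :
  override (upd a s x) u s.+1 n = override a (fun y => if y == s then x else u y) s n.+1.
Proof.
apply: functional_extensionality => y; rewrite /override /upd.
by do ![case: ifP => ? //]; lia.
Qed.

Lemma override_updS a u s n :
  override a u s n.+1 = override (upd a s (u s)) u s.+1 n.
Proof.
apply: functional_extensionality => y; rewrite /override /upd.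
by case: (eqVneq y s) => [->|]; do ![case: ifP => ? //]; lia.
Qed.

Lemma sat_fExs a s n p : sat a (fExs s n p) <-> exists u, sat (override a u s n) p.
Proof.
rewrite /fExs; elim: n s a => [|n IH] s a /=.
  by split=> [H|[u]]; [exists a|]; rewrite override0.
split=> [[x /IH [u Hu]]|[u]].
  by exists (fun y => if y == s then x else u y); rewrite -override_upd.
by rewrite override_updS => H; exists (u s); apply/IH; exists u.
Qed.

Lemma sat_fAlls a s n p : sat a (fAlls s n p) <-> forall u, sat (override a u s n) p.
Proof.
rewrite /fAlls; elim: n s a => [|n IH] s a /=.
  by split=> H; [move=> u|have := H a]; rewrite override0.
split=> H.
  by move=> u; rewrite override_updS; apply: (IH _ _).1 (H (u s)) u.
by move=> x; apply/IH => u; rewrite override_upd.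
Qed.

End FiniteConnectives.

Section Tuples.
Variable T : Type.
Implicit Types (f g z : nat -> T) (S : list T).

Definition injective_below n f := forall i j, i < n -> j < n -> f i = f j -> i = j.
Definition maps_into n f S := forall i, i < n -> In (f i) S.
Definition img f n := List.map f (List.seq 0 n).
Definition catf n f g : nat -> T := fun i => if i < n then f i else g (i - n).

Lemma in_img f n x : In x (img f n) <-> exists2 i, i < n & f i = x.
Proof.
rewrite /img in_map_iff; split=> [[i [<- /in_seq Hi]]|[i Hi <-]].
  by exists i => //; lia.
by exists i; split=> //; apply/in_seq; lia.
Qed.

Lemma length_img f n : length (img f n) = n.
Proof. by rewrite /img length_map length_seq. Qed.

Lemma eq_img f g n : (forall i, i < n -> f i = g i) -> img f n = img g n.
Proof. by move=> Hfg; apply: map_ext_in => i /in_seq Hi; apply: Hfg; lia. Qed.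

Lemma img_addn f n m : img f (n + m) = img f n ++ img (fun l => f (n + l)) m.
Proof.
elim: m => [|m IH]; first by rewrite addn0 /img /= app_nil_r.
by rewrite addnS /img !seq_S !map_app -!/(img _ _) IH -app_assoc.
Qed.

Lemma NoDup_img f n : injective_below n f -> NoDup (img f n).
Proof.
move=> Hf; apply: NoDup_map_NoDup_ForallPairs (seq_NoDup n 0).
by move=> i j /in_seq Hi /in_seq Hj; apply: Hf; lia.
Qed.

Lemma img_nth S d : img (fun i => List.nth i S d) (length S) = S.
Proof.
apply: (nth_ext _ _ d d); rewrite length_img // => i Hi.
rewrite /img (nth_indep _ _ (List.nth 0 S d)) ?length_img //.
by rewrite map_nth seq_nth.
Qed.

Lemma injective_below_nth S d : NoDup S -> injective_below (length S) (fun i => List.nth i S d).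
Proof. by move=> HS i j Hi Hj; apply: (proj1 (NoDup_nth S d) HS); lia. Qed.

Lemma injective_below_ext n f g :
  (forall i, i < n -> f i = g i) -> injective_below n f -> injective_below n g.
Proof. by move=> Hfg Hf i j Hi Hj; rewrite -!Hfg //; apply: Hf. Qed.

Lemma maps_into_ext n f g S :
  (forall i, i < n -> f i = g i) -> maps_into n f S -> maps_into n g S.
Proof. by move=> Hfg Hf i Hi; rewrite -Hfg //; apply: Hf. Qed.

Lemma catf_lt n f g i : i < n -> catf n f g i = f i.
Proof. by rewrite /catf => ->. Qed.

Lemma catf_addn n f g j : catf n f g (n + j) = g j.
Proof. by rewrite /catf ifF ?addKn //; lia. Qed.

Lemma catf_shift n f g : (fun j => catf n f g (n + j)) = g.
Proof. by apply: functional_extensionality => j; rewrite catf_addn. Qed.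

Lemma injective_below_catf n m f g :
  injective_below n f -> injective_below m g -> (forall i j, i < n -> j < m -> f i <> g j) ->
  injective_below (n + m) (catf n f g).
Proof.
move=> Hf Hg Hfg i j Hi Hj; rewrite /catf.
case: ifP => Hi'; case: ifP => Hj' E.
- exact: Hf.
- by case: (Hfg i (j - n) _ _ E); lia.
- by case: (Hfg j (i - n) _ _ (esym E)); lia.
- by have := Hg _ _ _ _ E; lia.
Qed.

Lemma maps_into_catf n m f g S :
  maps_into n f S -> maps_into m g S -> maps_into (n + m) (catf n f g) S.
Proof. by move=> Hf Hg i Hi; rewrite /catf; case: ifP => Hi'; [apply: Hf|apply: Hg; lia]. Qed.

Lemma exists_fresh_tuple (d : T) n S (used : list T) :
  NoDup S -> length used + n <= length S ->
  exists z, [/\ injective_below n z, maps_into n z S & forall i, i < n -> ~ In (z i) used].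
Proof.
elim: n used => [|n IH] used HS Hlen.
  by exists (fun _ => d); split=> i //; lia.
have [s Hs Hsu] : exists2 s, In s S & ~ In s used.
  apply: NNPP => Hn; suff: incl S used by move/(NoDup_incl_length HS); lia.
  by move=> x Hx; apply: NNPP => Hxu; apply: Hn; exists x.
have [z [Hz HzS Hzu]] := IH (s :: used) HS ltac:(simpl; lia).
exists (fun i => if i < n then z i else s); split.
- move=> i j Hi Hj; case: ifP => Hi'; case: ifP => Hj' E.
  + exact: Hz.
  + by case: (Hzu i Hi'); rewrite E; left.
  + by case: (Hzu j Hj'); rewrite -E; left.
  + lia.
- by move=> i Hi; case: ifP => Hi'; [apply: HzS|].
- by move=> i Hi; case: ifP => // Hi' Hzi; apply: (Hzu i Hi'); right.
Qed.

End Tuples.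

Arguments exists_fresh_tuple [T] d n [S] used.

Section Homogeneity.
Variable L : language.
Implicit Types (phi psi p : formula L).

Lemma fv_below_leq n m phi : fv_below n phi -> n <= m -> fv_below m phi.
Proof. by move=> Hphi Hnm w /Hphi; lia. Qed.

(* There is no substitution: renaming x_j to x_(B+j) in p is expressed by
   quantifying x_0, ..., x_(n-1) and equating them with the new variables. *)
Definition fShift p n B :=
  fExs 0 n (fAnd (fAndL (List.map (fun j => fEq (tvar L j) (tvar L (B + j))) (List.seq 0 n))) p).

Lemma free_fShift p n B w : fv_below n p -> free w (fShift p n B) -> B <= w < B + n.
Proof.
move=> Hp /free_fExs [Hw [/free_fAndL [q /in_map_iff [j [<- /in_seq Hj]]] /= [E|E]|/Hp]];
  lia.
Qed.

(* The gap x_n, ..., x_(n+N-1) keeps the shift above psi's own variables. *)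
Definition fPair phi n psi N := fIff phi (fShift psi N (n + N)).

Lemma fv_below_fPair phi n psi N :
  fv_below n phi -> fv_below N psi -> fv_below (n + N + N) (fPair phi n psi N).
Proof.
move=> Hphi Hpsi w /= [[/Hphi|/(free_fShift Hpsi)]|[/(free_fShift Hpsi)|/Hphi]]; lia.
Qed.

Variable M : structure L.
Implicit Types (a f g z : nat -> M) (S : list M).

Lemma sat_fShift a p n B :
  fv_below n p -> n <= B -> (sat a (fShift p n B) <-> sat (fun j => a (B + j)) p).
Proof.
move=> Hp HB; rewrite sat_fExs; split=> [[u /= [/sat_fAndL Heq Hu]]|Hsat].
  apply: (sat_ext_below Hp _).1 Hu => i Hi.
  have := Heq (fEq (tvar L i) (tvar L (B + i))); rewrite /= /override ifT ?ifF //; try lia.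
  by apply; apply/in_map_iff; exists i; split=> //; apply/in_seq; lia.
exists (fun j => a (B + j)) => /=; split.
  apply/sat_fAndL => q /in_map_iff [j [<- /in_seq Hj]] /=.
  by rewrite /override ifT ?ifF //; lia.
by apply: (sat_ext_below Hp _).1 Hsat => i Hi; rewrite /override ifT //; lia.
Qed.

Lemma sat_fPair a phi n psi N : fv_below N psi ->
  (sat a (fPair phi n psi N) <-> (sat a phi <-> sat (fun j => a (n + N + j)) psi)).
Proof. by move=> Hpsi; rewrite /= (sat_fShift _ Hpsi); [tauto|lia]. Qed.

Definition homogeneous phi n S := forall f g,
  maps_into n f S -> maps_into n g S -> injective_below n f -> injective_below n g ->
  (sat f phi <-> sat g phi).

Lemma homogeneous_dichotomy phi n S : homogeneous phi n S <->
  (forall f, maps_into n f S -> injective_below n f -> sat f phi) \/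
  (forall f, maps_into n f S -> injective_below n f -> ~ sat f phi).
Proof.
split=> [Hh|[Hphi|Hphi] f g Hf Hg If Ig]; last 2 first.
- by split=> _; apply: Hphi.
- by have := Hphi f Hf If; have := Hphi g Hg Ig; tauto.
case: (classic (exists2 f, maps_into n f S /\ injective_below n f & sat f phi)).
  by case=> f [Hf If] Hsat; left=> g Hg Ig; apply/(Hh _ _ Hg Hf Ig If).
by move=> Hno; right=> f Hf If Hsat; apply: Hno; exists f.
Qed.

Lemma homogeneous_incl phi n S S' : incl S' S -> homogeneous phi n S -> homogeneous phi n S'.
Proof. by move=> HS' Hh f g Hf Hg; apply: Hh => i Hi; apply: HS'; [apply: Hf|apply: Hg]. Qed.

Lemma fresh_neq f n z k (used : list M) : incl (img f n) used ->
  (forall j, j < k -> ~ In (z j) used) -> forall i j, i < n -> j < k -> f i <> z j.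
Proof.
by move=> Hf Hz i j Hi Hj E; apply: (Hz j Hj); rewrite -E; apply: Hf; apply/in_img; exists i.
Qed.

Lemma homogeneous_narrow phi n m S : NoDup S -> fv_below n phi -> n <= m -> m <= length S ->
  homogeneous phi m S -> homogeneous phi n S.
Proof.
move=> HS Hphi Hnm HmS Hh f g Hf Hg If Ig.
have [zf [Izf Hzf Ffresh]] := exists_fresh_tuple (dom_inh M) (m - n) (img f n) HS
  ltac:(rewrite length_img; lia).
have [zg [Izg Hzg Gfresh]] := exists_fresh_tuple (dom_inh M) (m - n) (img g n) HS
  ltac:(rewrite length_img; lia).
have Em : n + (m - n) = m by lia.
have := Hh (catf n f zf) (catf n g zg); rewrite -Em.
move/(_ (maps_into_catf Hf Hzf) (maps_into_catf Hg Hzg)).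
move/(_ (injective_below_catf If Izf (fresh_neq (incl_refl _) Ffresh))).
move/(_ (injective_below_catf Ig Izg (fresh_neq (incl_refl _) Gfresh))).
by rewrite !(sat_ext_below Hphi (catf_lt _ _)).
Qed.

Lemma homogeneous_fPair phi n psi N S : fv_below n phi -> fv_below N psi ->
  NoDup S -> 2 * (n + N + N) <= length S ->
  homogeneous (fPair phi n psi N) (n + N + N) S -> homogeneous phi n S /\ homogeneous psi N S.
Proof.
move=> Hphi Hpsi HS HlenS Hh; split=> f g Hf Hg If Ig.
- (* a common fresh tail z makes the right-hand sides of both biconditionals equal *)
  have [z [Iz Hz Fz]] := exists_fresh_tuple (dom_inh M) (N + N) (img f n ++ img g n) HS
    ltac:(rewrite length_app !length_img; lia).
  have Ef := incl_appl (img g n) (incl_refl (img f n)).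
  have Eg := incl_appr (img f n) (incl_refl (img g n)).
  have := Hh (catf n f z) (catf n g z); rewrite -addnA.
  move/(_ (maps_into_catf Hf Hz) (maps_into_catf Hg Hz)).
  move/(_ (injective_below_catf If Iz (fresh_neq Ef Fz))).
  move/(_ (injective_below_catf Ig Iz (fresh_neq Eg Fz))).
  rewrite !sat_fPair // !(sat_ext_below Hphi (catf_lt _ _)).
  have -> : (fun j => catf n f z (n + N + j)) = (fun j => catf n g z (n + N + j)).
    by apply: functional_extensionality => j; rewrite -addnA !catf_addn.
  by case: (classic (sat (fun j => catf n g z (n + N + j)) psi)); tauto.
- (* a common fresh head z makes the left-hand sides of both biconditionals equal *)
  have [z [Iz Hz Fz]] := exists_fresh_tuple (dom_inh M) (n + N) (img f N ++ img g N) HS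
    ltac:(rewrite length_app !length_img; lia).
  have Ef := incl_appl (img g N) (incl_refl (img f N)).
  have Eg := incl_appr (img f N) (incl_refl (img g N)).
  have Fzf i j : i < n + N -> j < N -> z i <> f j.
    by move=> Hi Hj /esym; apply: fresh_neq Ef Fz _ _ Hj Hi.
  have Fzg i j : i < n + N -> j < N -> z i <> g j.
    by move=> Hi Hj /esym; apply: fresh_neq Eg Fz _ _ Hj Hi.
  have := Hh (catf (n + N) z f) (catf (n + N) z g).
  move/(_ (maps_into_catf Hz Hf) (maps_into_catf Hz Hg)).
  move/(_ (injective_below_catf Iz If Fzf) (injective_below_catf Iz Ig Fzg)).
  rewrite !sat_fPair // !(sat_ext_below (fv_below_leq Hphi (leq_addr N n)) (catf_lt _ _)).
  rewrite !catf_shift.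
  by case: (classic (sat z phi)); tauto.
Qed.

End Homogeneity.

Section Symmetric.
Variables (L : language) (M : structure L).

Definition fv_below_list (D : list (formula L * nat)) := forall p, In p D -> fv_below p.2 p.1.

Lemma exists_homogeneous_fold (D : list (formula L * nat)) : fv_below_list D ->
  exists psi N, fv_below N psi /\ forall S : list M, NoDup S -> 2 * N <= length S ->
    homogeneous psi N S -> forall p, In p D -> homogeneous p.1 p.2 S.
Proof.
elim: D => [|[phi n] D IH] HD; first by exists (fFalse L), 0; split=> [w []|S _ _ _ p []].
have [psi [N [Hpsi HpsiD]]] := IH (fun p Hp => HD p (or_intror Hp)).
have Hphi : fv_below n phi := HD (phi, n) (or_introl erefl).
exists (fPair phi n psi N), (n + N + N); split; first exact: fv_below_fPair.
move=> S HS HlenS /(homogeneous_fPair Hphi Hpsi HS HlenS) [Hhphi Hhpsi] p [<-|Hp] //.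
by apply: HpsiD Hp => //; lia.
Qed.

(* The negation of the right-hand side of the theorem. *)
Definition has_symmetric_tuples := forall n (phi : formula L), fv_below n phi ->
  exists2 a : 'I_n -> M, injective a & forall pi1 pi2 : {perm 'I_n},
    sat (tassign (fun i => a (pi1 i))) phi -> sat (tassign (fun i => a (pi2 i))) phi.

Lemma tassign_lt n (c : 'I_n -> M) k (Hk : k < n) : tassign c k = c (Ordinal Hk).
Proof. by rewrite /tassign insubT. Qed.

Lemma injective_below_tassign n (c : 'I_n -> M) : injective c -> injective_below n (tassign c).
Proof. by move=> Hc i j Hi Hj; rewrite !tassign_lt => /Hc [ ]. Qed.

Lemma exists_perm_tassign n (a : 'I_n -> M) (f : nat -> M) :
  maps_into n f (img (tassign a) n) -> injective_below n f ->
  exists pi : {perm 'I_n}, forall k, k < n -> tassign (fun i => a (pi i)) k = f k.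
Proof.
move=> Hf If.
have [h Hh] : exists h : 'I_n -> 'I_n, forall i, a (h i) = f i.
  apply: (choice (fun i j : 'I_n => a j = f i)) => i; have /in_img [k Hk Ek] := Hf i (ltn_ord i).
  by exists (Ordinal Hk); rewrite -Ek tassign_lt.
have hinj : injective h.
  by move=> i j Eij; apply/ord_inj/If => //; rewrite -!Hh Eij.
by exists (perm hinj) => k Hk; rewrite tassign_lt permE Hh.
Qed.

Lemma exists_homogeneous_list m (psi : formula L) :
  has_symmetric_tuples -> fv_below m psi ->
  exists S : list M, [/\ NoDup S, length S = m & homogeneous psi m S].
Proof.
move=> Hsym Hpsi; have [a Ia Ha] := Hsym m psi Hpsi.
exists (img (tassign a) m); split; rewrite ?length_img //.
  exact/NoDup_img/injective_below_tassign.
move=> f g Hf Hg If Ig.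
have [pf Hpf] := exists_perm_tassign Hf If; have [pg Hpg] := exists_perm_tassign Hg Ig.
rewrite -(sat_ext_below Hpsi Hpf) -(sat_ext_below Hpsi Hpg).
by split; apply: Ha.
Qed.

Definition extends_to (A : list M) (D : list (formula L * nat)) m :=
  exists2 B, length B = m &
    NoDup (A ++ B)%list /\ forall p, In p D -> homogeneous p.1 p.2 (A ++ B)%list.

Definition extendable (A : list M) :=
  NoDup A /\ forall D m, fv_below_list D -> extends_to A D m.

Lemma extendable_nil : has_symmetric_tuples -> extendable [::].
Proof.
move=> Hsym; split=> [|D m HD]; first exact: NoDup_nil.
have [psi [N [Hpsi HpsiD]]] := exists_homogeneous_fold HD.
have [S [HS HlenS Hh]] :=
  exists_homogeneous_list Hsym (fv_below_leq (m := maxn (2 * N) m) Hpsi ltac:(lia)).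
have HhN : homogeneous psi N S by apply: homogeneous_narrow HS Hpsi _ _ Hh; lia.
have HSD := HpsiD S HS ltac:(lia) HhN.
exists (firstn m S); first by rewrite length_firstn; lia.
have HmS : incl (firstn m S) S.
  by rewrite -{2}(firstn_skipn m S); apply: incl_appl; apply: incl_refl.
split; first by apply: (NoDup_app_remove_r _ (skipn m S)); rewrite firstn_skipn.
by move=> p /HSD; apply: homogeneous_incl.
Qed.

End Symmetric.

Section ExtensionFormula.
Variable L : language.
Implicit Types (phi : formula L) (D : list (formula L * nat)).

Definition fDistinct s n : formula L :=
  fAndL (List.flat_map (fun l => List.map (fun l' =>
    if l == l' then fNot (fFalse L) else fNot (fEq (tvar L (s + l)) (tvar L (s + l'))))
    (List.seq 0 n)) (List.seq 0 n)).

Definition fAmong n s N : formula L :=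
  fAndL (List.map (fun j =>
    fOrL (List.map (fun l => fEq (tvar L j) (tvar L (s + l))) (List.seq 0 N))) (List.seq 0 n)).

(* Meaningful only for n <= s, so that the quantified x_0, ..., x_(n-1) do not
   capture the list x_s, ..., x_(s+N-1). *)
Definition fHomogeneous phi n s N :=
  fOr (fAlls 0 n (fImp (fAnd (fAmong n s N) (fDistinct 0 n)) phi))
      (fAlls 0 n (fImp (fAnd (fAmong n s N) (fDistinct 0 n)) (fNot phi))).

Definition fCopy s k : formula L :=
  fAndL (List.map (fun i => fEq (tvar L (s + i)) (tvar L i)) (List.seq 0 k)).

Definition max_arity D := List.fold_right (fun p acc => maxn p.2 acc) 0 D.

Lemma max_arity_ge D p : In p D -> p.2 <= max_arity D.
Proof. by elim: D => [|q D IH] //= [->|/IH]; lia. Qed.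

Definition extension_base k D := maxn k.+1 (max_arity D).

(* With A ++ [b] in x_0, ..., x_k, the witnesses x_s, ..., x_(s+k+m) begin with
   a copy of A ++ [b]; s lies above x_k and above every arity in D. *)
Definition fExtension k D m :=
  let s := extension_base k D in let N := k.+1 + m in
  fExs s N (fAnd (fCopy s k.+1)
    (fAnd (fDistinct s N) (fAndL (List.map (fun p => fHomogeneous p.1 p.2 s N) D)))).

Lemma free_fDistinct w s n : free w (fDistinct s n) -> s <= w < s + n.
Proof.
move=> /free_fAndL [q /in_flat_map [i [/in_seq Hi /in_map_iff [j [<- /in_seq Hj]]]]].
by case: eqP => _ //= [] ->; lia.
Qed.

Lemma free_fAmong w n s N : free w (fAmong n s N) -> w < n \/ s <= w < s + N.
Proof.
move=> /free_fAndL [q /in_map_iff [j [<- /in_seq Hj]]].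
by move=> /free_fOrL [q' /in_map_iff [l [<- /in_seq Hl]]] /= [->|->]; lia.
Qed.

Lemma free_fHomogeneous phi n s N w :
  fv_below n phi -> n <= s -> free w (fHomogeneous phi n s N) -> s <= w < s + N.
Proof.
move=> Hphi Hns.
by case=> /free_fAlls [Hw [[/free_fAmong|/free_fDistinct]|/Hphi]]; lia.
Qed.

Lemma free_fCopy w s k : free w (fCopy s k) -> w < k \/ s <= w < s + k.
Proof. by move=> /free_fAndL [q /in_map_iff [i [<- /in_seq Hi]]] /= [->|->]; lia. Qed.

Lemma free_fExtension k D m w : fv_below_list D -> free w (fExtension k D m) -> w <= k.
Proof.
rewrite /fExtension; set s := extension_base k D; set N := k.+1 + m.
move=> HD /free_fExs [Hw Hbody].
have [Hc|[Hd|/free_fAndL [q /in_map_iff [p [<- Hp]]]]] : free w (fCopy s k.+1) \/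
  free w (fDistinct s N) \/ free w (fAndL (List.map (fun p => fHomogeneous p.1 p.2 s N) D))
  := Hbody.
- by have := free_fCopy Hc; lia.
- by have := free_fDistinct Hd; lia.
- have Hs : p.2 <= s by have := max_arity_ge Hp; rewrite /s /extension_base; lia.
  by move/(free_fHomogeneous (HD p Hp) Hs); lia.
Qed.

End ExtensionFormula.

Section ExtensionSemantics.
Variables (L : language) (M : structure L).
Implicit Types (a u w : nat -> M) (phi : formula L) (D : list (formula L * nat)).

Lemma sat_fDistinct a s n : sat a (fDistinct L s n) <-> injective_below n (fun l => a (s + l)).
Proof.
rewrite sat_fAndL; split=> [H i j Hi Hj E|H q].
  apply: NNPP => /eqP Hij; apply: (H (fNot (fEq (tvar L (s + i)) (tvar L (s + j))))) E.
  apply/in_flat_map; exists i; split; first by apply/in_seq; lia.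
  by apply/in_map_iff; exists j; rewrite ifN //; split=> //; apply/in_seq; lia.
move=> /in_flat_map [i [/in_seq Hi /in_map_iff [j [<- /in_seq Hj]]]].
case: (eqVneq i j) => [_ /= []|/eqP Hij /= E].
by apply: Hij; apply: (H i j) => //; lia.
Qed.

Lemma sat_fAmong a n s N : sat a (fAmong L n s N) <-> maps_into n a (img (fun l => a (s + l)) N).
Proof.
rewrite sat_fAndL; split=> [H i Hi|H q /in_map_iff [j [<- /in_seq Hj]]].
  have Hi' : In i (List.seq 0 n) by apply/in_seq; lia.
  have [q /in_map_iff [l [<- /in_seq Hl]] /= E] := (sat_fOrL _ _).1 (H _ (in_map _ _ _ Hi')).
  by apply/in_img; exists l => //; lia.
have /in_img [l Hl E] := H j ltac:(lia).
apply/sat_fOrL; exists (fEq (tvar L j) (tvar L (s + l))) => //=.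
by apply/in_map_iff; exists l; split=> //; apply/in_seq; lia.
Qed.

Lemma sat_fHomogeneous a phi n s N : fv_below n phi -> n <= s ->
  (sat a (fHomogeneous phi n s N) <-> homogeneous phi n (img (fun l => a (s + l)) N)).
Proof.
move=> Hphi Hns; rewrite homogeneous_dichotomy /= !sat_fAlls.
set S := img _ N.
have Hs u : (fun l => override a u 0 n (s + l)) = (fun l => a (s + l)).
  by apply: functional_extensionality => l; rewrite /override ifF //; lia.
have Hlow u i : i < n -> override a u 0 n i = u i by move=> Hi; rewrite /override ifT.
have Hcond u : sat (override a u 0 n) (fAmong L n s N) /\ sat (override a u 0 n) (fDistinct L 0 n)
    <-> maps_into n u S /\ injective_below n u.
  rewrite sat_fAmong sat_fDistinct Hs; split=> -[Hm Hi]; split.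
  - by apply: maps_into_ext Hm => i /Hlow.
  - by apply: injective_below_ext Hi => i /Hlow.
  - by apply: maps_into_ext Hm => i /Hlow.
  - by apply: injective_below_ext Hi => i /Hlow.
have Hsat u : sat (override a u 0 n) phi <-> sat u phi by apply: sat_ext_below Hphi (Hlow u).
by split=> -[H|H]; [left|right|left|right] => u; move: (H u) (Hcond u) (Hsat u) => /=; tauto.
Qed.

Lemma sat_fCopy a s k : sat a (fCopy L s k) <-> forall i, i < k -> a (s + i) = a i.
Proof.
rewrite sat_fAndL; split=> [H i Hi|H q /in_map_iff [i [<- /in_seq Hi]]] /=; last by apply: H; lia.
apply: (H (fEq (tvar L (s + i)) (tvar L i))).
by apply/in_map_iff; exists i; split=> //; apply/in_seq; lia.
Qed.

Lemma sat_fExtension a k D m : fv_below_list D ->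
  sat a (fExtension k D m) <-> exists w, [/\ forall i, i <= k -> w i = a i,
    injective_below (k.+1 + m) w & forall p, In p D -> homogeneous p.1 p.2 (img w (k.+1 + m))].
Proof.
rewrite /fExtension; set s := extension_base k D; set N := k.+1 + m => HD.
have HsD p : In p D -> fv_below p.2 p.1 /\ p.2 <= s.
  by move=> Hp; split; [apply: HD|have := max_arity_ge Hp; rewrite /s /extension_base; lia].
have Hlow u i : i < s -> override a u s N i = a i by move=> Hi; rewrite /override ifF //; lia.
rewrite sat_fExs; split=> [[u Hu]|[w [Hw Iw Hhw]]].
  have [/sat_fCopy Hc [/sat_fDistinct Hd /sat_fAndL Hh]] :
    sat (override a u s N) (fCopy L s k.+1) /\ sat (override a u s N) (fDistinct L s N) /\
    sat (override a u s N) (fAndL (List.map (fun p => fHomogeneous p.1 p.2 s N) D)) := Hu.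
  exists (fun l => override a u s N (s + l)); split=> //.
    by move=> i Hi; rewrite Hc ?Hlow //; rewrite /s /extension_base; lia.
  move=> p Hp; have [Hp1 Hp2] := HsD p Hp.
  by apply/(sat_fHomogeneous _ _ Hp1 Hp2); apply: Hh; apply/in_map_iff; exists p.
exists (fun x => w (x - s)); set b := override a _ s N.
have Eb l : l < N -> b (s + l) = w l by move=> Hl; rewrite /b /override ifT ?addKn //; lia.
split; [|split].
- have Hks : k < s by rewrite /s /extension_base; lia.
  by apply/sat_fCopy => i Hi; rewrite Eb ?Hw /b ?Hlow //; lia.
- by apply/sat_fDistinct; apply: injective_below_ext Iw => l /Eb.
- apply/sat_fAndL => q /in_map_iff [p [<- Hp]]; have [Hp1 Hp2] := HsD p Hp.
  by apply/(sat_fHomogeneous _ _ Hp1 Hp2); rewrite (eq_img Eb); apply: Hhw.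
Qed.

End ExtensionSemantics.

Section Construction.
Variables (L : language) (M : structure L).
Implicit Types (A B : list M) (D : list (formula L * nat)).

Lemma upd_nth_app A B b i : i <= length A ->
  upd (fun j => List.nth j A (dom_inh M)) (length A) b i = List.nth i (A ++ b :: B) (dom_inh M).
Proof.
rewrite /upd; case: eqP => [->|Hi] HiA; first by rewrite nth_middle.
by rewrite app_nth1 //; lia.
Qed.

Lemma sat_fExtension_rcons A b D m : fv_below_list D ->
  sat (upd (fun j => List.nth j A (dom_inh M)) (length A) b) (fExtension (length A) D m) <->
  extends_to (A ++ [:: b])%list D m.
Proof.
move=> HD; rewrite sat_fExtension //; set k := length A.
have HkA B : length (A ++ b :: B) = k.+1 + length B by rewrite length_app /=; lia.
split=> [[w [Hw Iw Hh]]|[B HB [HnD Hh]]].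
  have Ew : img w (k.+1 + m) = A ++ b :: img (fun l => w (k.+1 + l)) m.
    rewrite img_addn (_ : img w k.+1 = A ++ [:: b]) -?app_assoc //.
    rewrite -[RHS](img_nth _ (dom_inh M)) (_ : length _ = k.+1); last by rewrite length_app /=; lia.
    by apply: eq_img => i Hi; rewrite Hw ?(upd_nth_app [::]) //; lia.
  exists (img (fun l => w (k.+1 + l)) m); first exact: length_img.
  by rewrite -app_assoc -Ew; split; [apply: NoDup_img|].
rewrite -app_assoc /= in HnD Hh.
exists (fun i => List.nth i (A ++ b :: B) (dom_inh M)); rewrite -HB -HkA; split.
- by move=> i Hi; rewrite (upd_nth_app B).
- exact: injective_below_nth.
- by rewrite img_nth.
Qed.

Lemma extends_to_incl A D m D' m' : extends_to A D m -> incl D' D -> m' <= m -> extends_to A D' m'.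
Proof.
case=> B HB [HnD Hh] HD' Hm'; exists (firstn m' B); first by rewrite length_firstn; lia.
have EB : A ++ B = (A ++ firstn m' B) ++ skipn m' B by rewrite -app_assoc firstn_skipn.
split; first by apply: (NoDup_app_remove_r _ (skipn m' B)); rewrite -EB.
move=> p /HD' /Hh; apply: homogeneous_incl.
by rewrite EB; apply: incl_appl; apply: incl_refl.
Qed.

Lemma extends_to_rcons A D m : extends_to A D m.+1 -> exists b, extends_to (A ++ [:: b])%list D m.
Proof. by case=> -[|b B] //= [HB] HAB; exists b, B; rewrite // -app_assoc. Qed.

Lemma extension_formulas_bound k (l : list (formula L)) :
  (forall phi, In phi l -> exists D m, fv_below_list D /\ phi = fExtension k D m) ->
  exists D m, fv_below_list D /\ forall phi, In phi l ->
    exists D' m', [/\ incl D' D, m' <= m & phi = fExtension k D' m'].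
Proof.
elim: l => [|q l IH] Hl; first by exists [::], 0; split=> [p []|phi []].
have [D [m [HD Hbound]]] := IH (fun phi Hphi => Hl phi (or_intror Hphi)).
have [Dq [mq [HDq ->]]] := Hl q (or_introl erefl).
exists (Dq ++ D)%list, (maxn mq m); split.
  by move=> p Hp; case: (in_app_or _ _ _ Hp); [apply: HDq|apply: HD].
move=> phi [<-|/Hbound [D' [m' [HD' Hm' ->]]]].
  by exists Dq, mq; split=> //; [apply: incl_appl; apply: incl_refl|lia].
by exists D', m'; split=> //; [apply: incl_appr|lia].
Qed.

Lemma extendable_rcons A : omega_saturated M -> extendable A -> exists b, extendable (A ++ [:: b]).
Proof.
move=> Hsat [_ HA]; set k := length A.
pose Sigma phi := exists D m, fv_below_list D /\ phi = fExtension k D m.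
have [|l Hl|b Hb] := Hsat Sigma (List.seq 0 k) k (fun j => List.nth j A (dom_inh M)).
- move=> _ [D [m [HD ->]]] w /(free_fExtension HD) Hw.
  have [->|Hwk] : w = k \/ w < k by lia.
    by left.
  by right; apply/in_seq; lia.
- have [D [m [HD Hbound]]] := extension_formulas_bound Hl.
  have [b Hb] := extends_to_rcons (HA D m.+1 HD).
  exists b => _ /Hbound [D' [m' [HD' Hm' ->]]].
  have HwfD' : fv_below_list D' by move=> p /HD'; apply: HD.
  by apply/sat_fExtension_rcons => //; apply: extends_to_incl Hb HD' Hm'.
- have Hext D m : fv_below_list D -> extends_to (A ++ [:: b])%list D m.
    by move=> HD; apply/sat_fExtension_rcons => //; apply: Hb; exists D, m.
  exists b; split=> //.
  have Hnil : fv_below_list (L := L) [::] by move=> p [].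
  by have [B _ [HnD _]] := Hext [::] 0 Hnil; apply: (NoDup_app_remove_r _ B).
Qed.

End Construction.

Section Indiscernibles.
Variables (L : language) (M : structure L).

Lemma exists_extendable_chain : omega_saturated M -> has_symmetric_tuples M ->
  exists chain : nat -> list M, forall k,
    [/\ extendable (chain k), length (chain k) = k & incl (chain k) (chain k.+1)].
Proof.
move=> Hsat Hsym.
have [next Hnext] : exists next : list M -> M,
    forall A, extendable A -> extendable (A ++ [:: next A])%list.
  apply: (choice (fun A b => extendable A -> extendable (A ++ [:: b])%list)) => A.
  case: (classic (extendable A)) => [/(extendable_rcons Hsat) [b Hb]|HA].
    by exists b.
  by exists (dom_inh M).
exists (fun k => iter k (fun A => A ++ [:: next A])%list [::]) => k; split.
- by elim: k => [|k IH] /=; [apply: extendable_nil|apply: Hnext].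
- by elim: k => [|k IH] //=; rewrite length_app IH /=; lia.
- by apply: incl_appl; apply: incl_refl.
Qed.

Lemma incl_chain (chain : nat -> list M) : (forall k, incl (chain k) (chain k.+1)) ->
  forall k k', k <= k' -> incl (chain k) (chain k').
Proof.
move=> Hchain k; elim=> [|k' IH]; first by rewrite leqn0 => /eqP ->; apply: incl_refl.
rewrite leq_eqVlt ltnS => /orP [/eqP ->|/IH Hk]; first exact: incl_refl.
exact: incl_tran Hk (Hchain k').
Qed.

Lemma chain_bound (chain : nat -> list M) n (c : 'I_n -> M) :
  (forall k, incl (chain k) (chain k.+1)) -> (forall i, exists k, In (c i) (chain k)) ->
  exists K, forall i, In (c i) (chain K).
Proof.
move=> Hchain /(choice (fun i k => In (c i) (chain k))) [kc Hkc].
exists (\max_i kc i) => i; apply: incl_chain (Hkc i) => //.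
exact: leq_bigmax.
Qed.

Lemma maps_into_tassign n (c : 'I_n -> M) S :
  (forall i, In (c i) S) -> maps_into n (tassign c) S.
Proof. by move=> Hc i Hi; rewrite tassign_lt. Qed.

Lemma exists_infinite_indiscernible : omega_saturated M -> has_symmetric_tuples M ->
  exists I : M -> Prop, ~ finite_set I /\ indiscernible_set I.
Proof.
move=> Hsat Hsym; have [chain Hchain] := exists_extendable_chain Hsat Hsym.
have Hincl k : incl (chain k) (chain k.+1) by have [] := Hchain k.
exists (fun x => exists k, In x (chain k)); split.
  case=> l Hl; have [[HnD _] Hlen _] := Hchain (length l).+1.
  have Hsub : incl (chain (length l).+1) l by move=> x Hx; apply: Hl; exists (length l).+1.
  by have := NoDup_incl_length HnD Hsub; rewrite Hlen; lia.
move=> n c d Ic Id HIc HId phi Hphi.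
have [Kc HKc] := chain_bound Hincl HIc; have [Kd HKd] := chain_bound Hincl HId.
set K := maxn Kc Kd.
have [[_ Hext] _ _] := Hchain K.
have HD : fv_below_list [:: (phi, n)] by move=> p [<-|[]].
have [B _ [_ Hh]] := Hext [:: (phi, n)] 0 HD.
have HK : incl (chain K) (chain K ++ B)%list by apply: incl_appl; apply: incl_refl.
apply: (Hh (phi, n) (or_introl erefl)); try apply: injective_below_tassign => //.
- by apply: maps_into_tassign => i; apply/HK/(incl_chain Hincl (leq_maxl Kc Kd)).
- by apply: maps_into_tassign => i; apply/HK/(incl_chain Hincl (leq_maxr Kc Kd)).
Qed.

Lemma exists_NoDup_of_infinite (I : M -> Prop) : ~ finite_set I ->
  forall n, exists l, [/\ NoDup l, length l = n & forall x, In x l -> I x].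
Proof.
move=> Hinf; elim=> [|n [l [HnD Hlen Hl]]]; first by exists [::]; split=> //; exact: NoDup_nil.
have [x Hx Hxl] : exists2 x, I x & ~ In x l.
  apply: NNPP => Hno; apply: Hinf; exists l => x Hx.
  by apply: NNPP => Hxl; apply: Hno; exists x.
exists (x :: l); split; [exact: NoDup_cons|by rewrite /= Hlen|].
by move=> y [<-|/Hl].
Qed.

Lemma no_infinite_indiscernible n (phi : formula L) : fv_below n phi ->
  (forall a : 'I_n -> M, injective a -> exists pi1 pi2 : {perm 'I_n},
     sat (tassign (fun i => a (pi1 i))) phi /\ ~ sat (tassign (fun i => a (pi2 i))) phi) ->
  ~ exists I : M -> Prop, ~ finite_set I /\ indiscernible_set I.
Proof.
move=> Hphi Hwit [I [Hinf Hind]].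
have [l [HnD Hlen Hl]] := exists_NoDup_of_infinite Hinf n.
pose a (i : 'I_n) := List.nth i l (dom_inh M).
have Ia : injective a.
  move=> i j Eij; apply: ord_inj.
  by apply: (injective_below_nth (d := dom_inh M) HnD); rewrite ?Hlen ?ltn_ord.
have HIa i : I (a i) by apply: Hl; apply: nth_In; have := ltn_ord i; lia.
have [pi1 [pi2 [H1 H2]]] := Hwit a Ia.
have := Hind n _ _ (inj_comp Ia (@perm_inj _ pi1)) (inj_comp Ia (@perm_inj _ pi2))
  (fun i => HIa _) (fun i => HIa _) phi Hphi.
by rewrite /comp; tauto.
Qed.

End Indiscernibles.

Theorem mainTheorem13 (L : language) (T : theory L) (C : structure L) :
  complete_theory T -> models C T -> omega_saturated C ->
  ((~ exists I : C -> Prop, ~ finite_set I /\ indiscernible_set I) <->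
   (exists (n : nat) (phi : formula L), fv_below n phi /\
      forall a : 'I_n -> C, injective a ->
        exists pi1 pi2 : {perm 'I_n},
          sat (tassign (fun i => a (pi1 i))) phi /\
          ~ sat (tassign (fun i => a (pi2 i))) phi)).
Proof.
move=> _ _ Hsat; split=> [Hno|[n [phi [Hphi Hwit]]]]; last exact: no_infinite_indiscernible Hwit.
apply: NNPP => Hnowit; apply/Hno/exists_infinite_indiscernible => // n phi Hphi.
apply: NNPP => Hnsym; apply: Hnowit; exists n, phi; split=> // a Ia.
apply: NNPP => Hnpi; apply: Hnsym; exists a => // pi1 pi2 H1.
by apply: NNPP => H2; apply: Hnpi; exists pi1, pi2.
Qed.
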